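(* Let $\mathcal G$ be a finite connected groupoid and $\alpha=(S_g,\alpha_g)_{g\in\mathcal G}$ a unital group-type partial action of $\mathcal G$ on a commutative ring $S=\bigoplus_{y\in\mathcal G_0}S_y$, with $S_g=S1_g$ and $1_g\neq0$ for all $g$. Let $\mathcal H\in\mathrm{wSub}_\alpha(\mathcal G)$, with connected components $\mathcal H_1,\dots,\mathcal H_r$ having object sets $Y_1,\dots,Y_r$, choose $y_j\in Y_j$, and let $T=S^{\alpha_{\mathcal H}}$ and $T_{y_j}=S_{y_j}^{\alpha_{\mathcal H_j(y_j)}}$. The following are equivalent: (i) $T$ is $\alpha$-strong; (ii) for any $g,h\in\mathcal G$ with $t(g)=t(h)$ and $g^{-1}h\notin\mathcal G_T$, and any non-zero idempotent $e\in S_g\cup S_h$, there exists $t\in T$ with $\alpha_g(t1_{g^{-1}})e\neq\alpha_h(t1_{h^{-1}})e$; (iii) $T_{y_j}$ is $\alpha_{\mathcal G(y_j,y_j)}$-strong for all $1\le j\le r$.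
   Context: A groupoid is a small category with all morphisms invertible; $\mathcal G_0$ is its object set (identified with identity morphisms), $s(g),t(g)$ source and target, $\mathcal G(x,y)=\{g:s(g)=x,t(g)=y\}$, $\mathcal G(x)=\mathcal G(x,x)$; $gh$ defined iff $s(g)=t(h)$; connected means all $\mathcal G(x,y)\neq\emptyset$; connected components are full subgroupoids on classes of $x\sim y\iff\mathcal G(x,y)\ne\emptyset$; wide means containing all objects. A partial action $\alpha=(S_g,\alpha_g)_{g\in\mathcal G}$ on a ring $S$: for each $g$, $S_{t(g)}$ is an ideal of $S$, $S_g$ an ideal of $S_{t(g)}$, $\alpha_g:S_{g^{-1}}\to S_g$ a ring isomorphism; $\alpha_x=\mathrm{id}_{S_x}$; for composable $(g,h)$, $\alpha_h^{-1}(S_{g^{-1}}\cap S_h)\subseteq S_{(gh)^{-1}}$ and $\alpha_g\alpha_h(a)=\alpha_{gh}(a)$ there. Unital: $S_g=S1_g$, $1_g$ central idempotent. A partial action of a connected groupoid $\mathcal K$ on $A=\bigoplus_{y\in\mathcal K_0}A_y$ is group-type if there are $x\in\mathcal K_0$ and $\tau_y\in\mathcal K(x,y)$ ($\tau_x=x$) with $A_{\tau_y^{-1}}=A_x$, $A_{\tau_y}=A_y$ for all $y$; for non-connected $\mathcal K$ it is group-type if each restriction to a connected component is group-type. For a subgroupoid $\mathcal H$, $\alpha_{\mathcal H}=(S_h,\alpha_h)_{h\in\mathcal H}$ acts on $\bigoplus_{z\in\mathcal H_0}S_z$; $\mathrm{wSub}_\alpha(\mathcal G)$ is the set of wide subgroupoids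 $\mathcal H$ with $\alpha_{\mathcal H}$ group-type. For a subgroupoid $\mathcal K$ and subring $A\subseteq S$, $A^{\alpha_{\mathcal K}}=\{a\in A:\alpha_k(a1_{k^{-1}})=a1_k\ \forall k\in\mathcal K\}$. For a subring $T\subseteq S$, $\mathcal G_T=\{g\in\mathcal G:\alpha_g(t1_{g^{-1}})=t1_g\ \forall t\in T\}$; for $y\in\mathcal G_0$ and subring $B\subseteq S_y$, $\mathcal G(y)_B=\{l\in\mathcal G(y):\alpha_l(b1_{l^{-1}})=b1_l\ \forall b\in B\}$. For a subring $T\subseteq S$ and $y\in\mathcal G_0$ put $T_y=T1_y$ (for a subring $B\subseteq S_y$, $B1_y=B$). $T_y$ is $\alpha_{\mathcal G(y,z)}$-strong if for any $g,h\in\mathcal G(y,z)$ with $g^{-1}h\notin\mathcal G(y)_{T_y}$ and any non-zero idempotent $e\in S_g\cup S_h$ there is $t_y\in T_y$ with $\alpha_g(t_y1_{g^{-1}})e\neq\alpha_h(t_y1_{h^{-1}})e$. $T$ is $\alpha$-strong if $T_y$ is $\alpha_{\mathcal G(y,z)}$-strong for all $y,z\in\mathcal G_0$. *)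

From HB Require Import structures.
From mathcomp Require Import all_boot all_algebra.
Set Implicit Arguments. Unset Strict Implicit. Unset Printing Implicit Defensive.
Import GRing.Theory.
Local Open Scope ring_scope.

(* A finite groupoid: finite object set, finite morphism set, source, target,
   identities, composition (comp g h = gh, meaningful when src g = tgt h), inverse. *)
Record groupoid := Groupoid {
  obj : finType;
  mor : finType;
  src : mor -> obj;
  tgt : mor -> obj;
  idm : obj -> mor;
  comp : mor -> mor -> mor;
  inv : mor -> mor;
  src_idm : forall x, src (idm x) = x;
  tgt_idm : forall x, tgt (idm x) = x;
  src_comp : forall g h, src g = tgt h -> src (comp g h) = src h;
  tgt_comp : forall g h, src g = tgt h -> tgt (comp g h) = tgt g;
  compA : forall f g h, src f = tgt g -> src g = tgt h ->
            comp f (comp g h) = comp (comp f g) h;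
  comp_idl : forall g, comp (idm (tgt g)) g = g;
  comp_idr : forall g, comp g (idm (src g)) = g;
  src_inv : forall g, src (inv g) = tgt g;
  tgt_inv : forall g, tgt (inv g) = src g;
  comp_inv : forall g, comp g (inv g) = idm (tgt g);
  inv_comp : forall g, comp (inv g) g = idm (src g)
}.

Section Defs.
Variable G : groupoid.

Definition connected : Prop :=
  forall x y : obj G, exists g : mor G, src g = x /\ tgt g = y.

Definition wide_subgroupoid (H : mor G -> Prop) : Prop :=
  (forall x, H (idm x)) /\
  (forall g h, H g -> H h -> src g = tgt h -> H (comp g h)) /\
  (forall g, H g -> H (inv g)).

Definition Hconn (H : mor G -> Prop) (x y : obj G) : Prop :=
  exists h, H h /\ src h = x /\ tgt h = y.

Variable S : comNzRingType.
(* e g = 1_g, al g = alpha_g (only meaningful on S_{g^-1} = S 1_{g^-1}) *)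
Variables (e : mor G -> S) (al : mor G -> S -> S).

Definition inI (g : mor G) (a : S) : Prop := a * e g = a.

Definition unital_partial_action : Prop :=
  (forall g, e g * e g = e g) /\
  (forall g, e g * e (idm (tgt g)) = e g) /\
  (forall g a, inI (inv g) a -> inI g (al g a)) /\
  (forall g a b, inI (inv g) a -> inI (inv g) b -> al g (a + b) = al g a + al g b) /\
  (forall g a b, inI (inv g) a -> inI (inv g) b -> al g (a * b) = al g a * al g b) /\
  (forall g a b, inI (inv g) a -> inI (inv g) b -> al g a = al g b -> a = b) /\
  (forall g b, inI g b -> exists a, inI (inv g) a /\ al g a = b) /\
  (forall x a, inI (idm x) a -> al (idm x) a = a) /\
  (forall g h, src g = tgt h -> forall a, inI (inv h) a ->
     inI (inv g) (al h a) -> inI h (al h a) ->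
     inI (inv (comp g h)) a /\ al g (al h a) = al (comp g h) a).

(* S = (+)_{y in G_0} S_y with S_y = S 1_y *)
Definition direct_sum_decomp : Prop :=
  (forall x y : obj G, x != y -> e (idm x) * e (idm y) = 0) /\
  \sum_(y : obj G) e (idm y) = 1.

(* the restriction of alpha to the subgroupoid H, on the component with object
   set Y (a connected full subgroupoid of H), is group-type *)
Definition group_type_on (H : mor G -> Prop) (Y : obj G -> Prop) : Prop :=
  exists x, Y x /\ exists tau : obj G -> mor G,
    tau x = idm x /\
    forall y, Y y -> H (tau y) /\ src (tau y) = x /\ tgt (tau y) = y /\
      e (inv (tau y)) = e (idm x) /\ e (tau y) = e (idm y).

Definition group_type_sub (H : mor G -> Prop) : Prop :=
  forall x, group_type_on H (Hconn H x).

Definition wSub (H : mor G -> Prop) : Prop :=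
  wide_subgroupoid H /\ group_type_sub H.

Definition fixed (K : mor G -> Prop) (A : S -> Prop) : S -> Prop :=
  fun a => A a /\ forall k, K k -> al k (a * e (inv k)) = a * e k.

Definition stab (T : S -> Prop) (g : mor G) : Prop :=
  forall t, T t -> al g (t * e (inv g)) = t * e g.

Definition Tat (T : S -> Prop) (y : obj G) : S -> Prop :=
  fun a => exists t, T t /\ a = t * e (idm y).

Definition strong_at (B : S -> Prop) (y z : obj G) : Prop :=
  forall g h : mor G, src g = y -> tgt g = z -> src h = y -> tgt h = z ->
    ~ stab B (comp (inv g) h) ->
    forall f : S, f * f = f -> f != 0 -> (inI g f \/ inI h f) ->
    exists b, B b /\ al g (b * e (inv g)) * f != al h (b * e (inv h)) * f.

Definition alpha_strong (T : S -> Prop) : Prop :=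
  forall y z : obj G, strong_at (Tat T y) y z.

End Defs.

From mathcomp Require Import all_boot all_algebra.
From Stdlib Require Import ClassicalEpsilon.
Import GRing.Theory.
Local Open Scope ring_scope.
Set Implicit Arguments. Unset Strict Implicit. Unset Printing Implicit Defensive.

(* Call k full when 1_{k^-1} = 1_{s(k)} and 1_k = 1_{t(k)}.  Then alpha_k is a
   ring isomorphism S_{s(k)} -> S_{t(k)}, and composing with a full morphism is
   compatible with the partial action.  Conjugating a pair (g, h) to
   (m g k1, m h k2) by full morphisms with k1, k2 in H therefore transports both
   the hypothesis g^-1 h \notin G_T and the conclusion of strongness.  The
   group-type hypotheses provide full morphisms between any two objects of G,
   and inside H between any two objects of one component of H.  So every pair
   can be moved to a pair of loops at some y_j, giving (iii) => (i), and, when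
   s(g) and s(h) lie in one component of H, to a pair with a common source,
   giving (i) => (ii).  When they lie in different components, the element of
   T equal to 1 on the component of s(g) and to 0 on that of s(h) separates
   g and h.  Finally T_{y_j} is the set of H(y_j)-invariants of S_{y_j}: such
   an invariant b extends to sum_w alpha_{k_w}(b) in T, with k_w : y_j -> w
   full in H. *)

Ltac endpoints :=
  repeat match goal with
  | hyp : context[src (inv ?a)] |- _ => rewrite (src_inv a) in hyp
  | hyp : context[tgt (inv ?a)] |- _ => rewrite (tgt_inv a) in hyp
  | hyp : context[src (idm ?a)] |- _ => rewrite (src_idm a) in hyp
  | hyp : context[tgt (idm ?a)] |- _ => rewrite (tgt_idm a) in hyp
  end;
  rewrite ?src_inv ?tgt_inv ?src_idm ?tgt_idm;
  first [ done | congruence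
        | rewrite src_comp; [endpoints | endpoints]
        | rewrite tgt_comp; [endpoints | endpoints] ].

Section Groupoid.
Variable G : groupoid.
Implicit Types (g h k m : mor G) (x y z : obj G).

Lemma invK g : inv (inv g) = g.
Proof.
have := @compA G (inv (inv g)) (inv g) g.
rewrite !src_inv tgt_inv => /(_ erefl erefl).
rewrite inv_comp (inv_comp (inv g)) src_inv comp_idl.
have -> : src g = src (inv (inv g)) by rewrite !src_inv tgt_inv.
by rewrite comp_idr.
Qed.

Lemma inv_idm x : inv (idm x) = idm x.
Proof.
rewrite -{1}(comp_idl (inv (idm x))) tgt_inv src_idm.
by have := comp_inv (idm x); rewrite tgt_idm.
Qed.

Lemma compKVg g h : tgt h = tgt g -> comp g (comp (inv g) h) = h.
Proof.
move=> hg; rewrite compA; try endpoints.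
by rewrite comp_inv -hg comp_idl.
Qed.

Lemma compKg g h : src g = tgt h -> comp (inv g) (comp g h) = h.
Proof. by move=> hg; have := @compKVg (inv g) h; rewrite invK; apply; endpoints. Qed.

Lemma compgK g h : src h = tgt g -> comp (comp h g) (inv g) = h.
Proof. by move=> hg; rewrite -compA; try endpoints; rewrite comp_inv -hg comp_idr. Qed.

Lemma compgKV g h : src h = src g -> comp (comp h (inv g)) g = h.
Proof. by move=> hg; have := @compgK (inv g) h; rewrite invK; apply; endpoints. Qed.

Lemma invM g h : src g = tgt h -> inv (comp g h) = comp (inv h) (inv g).
Proof.
move=> hgh.
have hV : comp (comp (inv h) (inv g)) (comp g h) = idm (src h).
  by rewrite compA; try endpoints; rewrite compgKV; try endpoints; rewrite inv_comp.
rewrite -(comp_idl (inv (comp g h))) tgt_inv src_comp // -hV -compA; try endpoints.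
rewrite comp_inv tgt_comp // -[RHS]comp_idr; congr comp; endpoints.
Qed.

Lemma compV_conj g h m k1 k2 :
  tgt g = tgt h -> src m = tgt g -> src g = tgt k1 -> src h = tgt k2 ->
  comp (inv (comp m (comp g k1))) (comp m (comp h k2)) =
  comp (inv k1) (comp (comp (inv g) h) k2).
Proof.
move=> hgh hm h1 h2.
rewrite invM; last by endpoints.
rewrite invM; last by endpoints.
rewrite -compA; try endpoints.
rewrite compKg; last by endpoints.
by rewrite -(@compA _ (inv k1) (inv g) (comp h k2)); try endpoints;
   rewrite (@compA _ (inv g) h k2); endpoints.
Qed.

Lemma Hconn_refl (H : mor G -> Prop) y : wide_subgroupoid H -> Hconn H y y.
Proof. by case=> Hid _; exists (idm y); rewrite src_idm tgt_idm. Qed.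

Lemma Hconn_trans (H : mor G -> Prop) x y z : wide_subgroupoid H ->
  Hconn H x y -> Hconn H y z -> Hconn H x z.
Proof.
case=> _ [Hcomp _] [k [Hk [<- <-]]] [l [Hl [hl <-]]].
by exists (comp l k); rewrite src_comp // tgt_comp //; split=> //; apply: Hcomp.
Qed.

End Groupoid.

Section PartialAction.
Variables (G : groupoid) (S : comNzRingType).
Variables (e : mor G -> S) (al : mor G -> S -> S).
Hypothesis hpa : unital_partial_action e al.
Implicit Types (g h k m : mor G) (a b c f t : S).

Local Notation act g t := (al g (t * e (inv g))).

Lemma e_idem g : e g * e g = e g.
Proof. by case: hpa => h _; apply: h. Qed.

Lemma e_tgt g : e g * e (idm (tgt g)) = e g.
Proof. by case: hpa => _ [h _]; apply: h. Qed.

Lemma alpha_in g a : inI e (inv g) a -> inI e g (al g a).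
Proof. by case: hpa => _ [_ [h _]]; apply: h. Qed.

Lemma alphaD g a b : inI e (inv g) a -> inI e (inv g) b ->
  al g (a + b) = al g a + al g b.
Proof. by case: hpa => _ [_ [_ [h _]]]; apply: h. Qed.

Lemma alphaM g a b : inI e (inv g) a -> inI e (inv g) b ->
  al g (a * b) = al g a * al g b.
Proof. by case: hpa => _ [_ [_ [_ [h _]]]]; apply: h. Qed.

Lemma alpha_inj g a b : inI e (inv g) a -> inI e (inv g) b ->
  al g a = al g b -> a = b.
Proof. by case: hpa => _ [_ [_ [_ [_ [h _]]]]]; apply: h. Qed.

Lemma alpha_onto g b : inI e g b -> exists a, inI e (inv g) a /\ al g a = b.
Proof. by case: hpa => _ [_ [_ [_ [_ [_ [h _]]]]]]; apply: h. Qed.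

Lemma alpha_idm (x : obj G) a : inI e (idm x) a -> al (idm x) a = a.
Proof. by case: hpa => _ [_ [_ [_ [_ [_ [_ [h _]]]]]]]; apply: h. Qed.

Lemma alpha_comp g h : src g = tgt h -> forall a, inI e (inv h) a ->
  inI e (inv g) (al h a) -> inI e h (al h a) ->
  inI e (inv (comp g h)) a /\ al g (al h a) = al (comp g h) a.
Proof. by case: hpa => _ [_ [_ [_ [_ [_ [_ [_ hcomp]]]]]]]; apply: hcomp. Qed.

Lemma e_src g : e (inv g) * e (idm (src g)) = e (inv g).
Proof. by have := e_tgt (inv g); rewrite tgt_inv. Qed.

Lemma inI_tgt g a : inI e g a -> inI e (idm (tgt g)) a.
Proof. by rewrite /inI => ha; rewrite -{1}ha -mulrA e_tgt. Qed.

Lemma inI_e g : inI e g (e g).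
Proof. exact: e_idem. Qed.

Lemma inI_mulr g a : inI e g (a * e g).
Proof. by rewrite /inI -mulrA e_idem. Qed.

Lemma inI0 g : inI e g 0.
Proof. by rewrite /inI mul0r. Qed.

Lemma alpha0 g : al g 0 = 0.
Proof.
have := alphaD (inI0 (inv g)) (inI0 (inv g)); rewrite addr0 => h0.
by apply/(@addrI _ (al g 0)); rewrite addr0 -h0.
Qed.

Lemma alpha_e g : al g (e (inv g)) = e g.
Proof.
have [a [ha hae]] := alpha_onto (inI_e g).
rewrite -hae -{1}ha alphaM //; last exact: inI_e.
by rewrite mulrC hae (alpha_in (inI_e (inv g))).
Qed.

Lemma act_in g t : inI e g (act g t).
Proof. exact/alpha_in/inI_mulr. Qed.

Lemma actM g s t : act g (s * t) = act g s * act g t.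
Proof.
rewrite -alphaM; try exact: inI_mulr.
by rewrite mulrACA e_idem.
Qed.

Lemma act1 g : act g 1 = e g.
Proof. by rewrite mul1r alpha_e. Qed.

Lemma act0 g : act g 0 = 0.
Proof. by rewrite mul0r alpha0. Qed.

Lemma act_src g t : act g (t * e (idm (src g))) = act g t.
Proof. by rewrite -mulrA (mulrC (e (idm _))) e_src. Qed.

Lemma alphaK g a : inI e (inv g) a -> al (inv g) (al g a) = a.
Proof.
move=> ha.
have ha' : inI e (inv (inv g)) (al g a) by rewrite invK; exact: alpha_in.
have [_ ->] := alpha_comp (src_inv g) ha ha' (alpha_in ha).
by rewrite inv_comp alpha_idm // /inI -{1}ha -mulrA e_src.
Qed.

Definition full g := e (inv g) = e (idm (src g)) /\ e g = e (idm (tgt g)).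

Lemma full_inv g : full g -> full (inv g).
Proof. by case=> h1 h2; rewrite /full invK src_inv tgt_inv. Qed.

Lemma full_idm (x : obj G) : full (idm x).
Proof. by rewrite /full inv_idm src_idm tgt_idm. Qed.

Lemma full_inI g a : full g -> inI e (idm (tgt g)) a -> inI e g a.
Proof. by case=> _ h; rewrite /inI h. Qed.

Lemma full_inIV g a : full g -> inI e (idm (src g)) a -> inI e (inv g) a.
Proof. by case=> h _; rewrite /inI h. Qed.

Lemma inI_comp_fullr g k c : full k -> src g = tgt k ->
  inI e (inv (comp g k)) c -> inI e (inv k) c.
Proof.
by move=> fk hgk hc; apply: full_inIV => //; have := inI_tgt hc;
   rewrite tgt_inv src_comp.
Qed.

Lemma alpha_comp_fullr g k c : full k -> src g = tgt k ->
  inI e (inv (comp g k)) c ->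
  inI e (inv g) (al k c) /\ al (comp g k) c = al g (al k c).
Proof.
move=> fk hgk hc.
have hck := inI_comp_fullr fk hgk hc.
have hkc : inI e (inv (inv k)) (al k c) by rewrite invK; exact: alpha_in.
have hkkc : al (inv k) (al k c) = c by rewrite alphaK.
have hgkV : src (comp g k) = tgt (inv k) by endpoints.
have hc' : inI e (inv (comp g k)) (al (inv k) (al k c)) by rewrite hkkc.
have hck' : inI e (inv k) (al (inv k) (al k c)) by rewrite hkkc.
have [hgc _] := alpha_comp hgkV hkc hc' hck'.
rewrite compgK // in hgc.
by have [_ ->] := alpha_comp hgk hck hgc (alpha_in hck).
Qed.

(* alpha_k maps the ideal S_{(gk)^-1} onto S_{g^-1}, hence its unit to the unit. *)
Lemma alpha_e_comp_fullr g k : full k -> src g = tgt k ->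
  al k (e (inv (comp g k))) = e (inv g).
Proof.
move=> fk hgk.
have [hu _] := alpha_comp_fullr fk hgk (inI_e (inv (comp g k))).
have hgk_e : inI e k (e (inv g)).
  by apply: full_inI => //; rewrite -hgk; exact: e_src.
have [c [hc hce]] := alpha_onto hgk_e.
have hgc : inI e (inv g) (al k c) by rewrite hce; exact: inI_e.
have [hcgk _] := alpha_comp hgk hc hgc (alpha_in hc).
rewrite -{1}hu -{1}hce mulrC -alphaM ?hcgk //.
exact: inI_comp_fullr fk hgk (inI_e _).
Qed.

Lemma act_comp_fullr g k t : full k -> src g = tgt k ->
  act (comp g k) t = act g (act k t).
Proof.
move=> fk hgk.
have [_ ->] := alpha_comp_fullr fk hgk (inI_mulr _ t).
have hgkk := inI_comp_fullr fk hgk (inI_e (inv (comp g k))).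
rewrite -(alpha_e_comp_fullr fk hgk) -alphaM //; last exact: inI_mulr.
by rewrite -mulrA (mulrC (e (inv k))) hgkk.
Qed.

Lemma e_comp_fullr g k : full k -> src g = tgt k -> e (comp g k) = e g.
Proof.
move=> fk hgk; rewrite -act1 act_comp_fullr // act1.
by case: fk => _ ->; rewrite -hgk -[e (idm (src g))]mul1r act_src act1.
Qed.

Lemma e_inv_comp_fulll g k : full g -> src g = tgt k ->
  e (inv (comp g k)) = e (inv k).
Proof.
by move=> fg hgk; rewrite invM // e_comp_fullr //; [exact: full_inv | endpoints].
Qed.

Lemma act_comp_fulll g k t : full g -> src g = tgt k ->
  act (comp g k) t = act g (act k t).
Proof.
move=> fg hgk; rewrite e_inv_comp_fulll //.
have hkt : inI e (inv g) (act k t).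
  by apply: full_inIV => //; rewrite hgk; exact/inI_tgt/act_in.
by have [_ <-] := alpha_comp hgk (inI_mulr _ t) hkt (act_in k t); rewrite hkt.
Qed.

Lemma e_comp_fulll g k : full g -> src g = tgt k -> e (comp g k) = act g (e k).
Proof. by move=> fg hgk; rewrite -act1 act_comp_fulll // act1. Qed.

Lemma full_comp g k : full g -> full k -> src g = tgt k -> full (comp g k).
Proof.
move=> fg fk hgk; split.
  by rewrite e_inv_comp_fulll // src_comp //; case: fk.
by rewrite e_comp_fullr // tgt_comp //; case: fg.
Qed.

Lemma sum_idm_mulr (F : obj G -> S) (w : obj G) :
  (forall x y : obj G, x != y -> e (idm x) * e (idm y) = 0) ->
  (forall u, F u * e (idm u) = F u) -> (\sum_u F u) * e (idm w) = F w.
Proof.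
move=> horth FS; rewrite mulr_suml (bigD1 w) //= FS big1 ?addr0 // => u hu.
by rewrite -FS -mulrA horth ?mulr0.
Qed.

Definition strong_pair (B : S -> Prop) g h :=
  ~ stab e al B (comp (inv g) h) ->
  forall f, f * f = f -> f != 0 -> (inI e g f \/ inI e h f) ->
  exists b, B b /\ act g b * f != act h b * f.

Lemma strong_pair_ext (B B' : S -> Prop) g h : (forall a, B a <-> B' a) ->
  strong_pair B g h -> strong_pair B' g h.
Proof.
move=> hB hQ hns f fI fnz hf.
have hns' : ~ stab e al B (comp (inv g) h).
  by move=> hs; apply: hns => t /hB; apply: hs.
by have [b [/hB Bb hne]] := hQ hns' f fI fnz hf; exists b.
Qed.

Section Invariants.
Variable T : S -> Prop.

Lemma stab_comp_fullr g k : full k -> stab e al T (inv k) -> src g = tgt k ->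
  stab e al T (comp g k) -> stab e al T g.
Proof.
move=> fk hkV hgk hs t Tt.
have hgkV : src (comp g k) = tgt (inv k) by endpoints.
rewrite -(compgK hgk) act_comp_fullr //; last exact: full_inv.
rewrite (hkV _ Tt); case: (fk) => -> _.
rewrite -(src_comp hgk) act_src (hs _ Tt).
by rewrite compgK // e_comp_fullr.
Qed.

Lemma stab_comp_fulll g k : full g -> stab e al T (inv g) -> src g = tgt k ->
  stab e al T (comp g k) -> stab e al T k.
Proof.
move=> fg hgV hgk hs t Tt.
have hVgk : src (inv g) = tgt (comp g k) by endpoints.
rewrite -(compKg hgk) act_comp_fulll //; last exact: full_inv.
rewrite (hs _ Tt) actM (hgV _ Tt) -(e_comp_fulll (full_inv fg) hVgk) compKg //.
by case: (fg) => -> _; rewrite -mulrA (mulrC _ (e k)) hgk e_tgt.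
Qed.

Lemma stab_Tat (y : obj G) k : src k = y -> tgt k = y ->
  stab e al (Tat e T y) k <-> stab e al T k.
Proof.
move=> <- hk.
have e_loop t : t * e (idm (src k)) * e k = t * e k.
  by rewrite -mulrA (mulrC (e (idm _))) -hk e_tgt.
split=> [hs t Tt | hs _ [t [Tt ->]]].
  by have := hs _ (ex_intro _ t (conj Tt erefl)); rewrite act_src e_loop.
by rewrite act_src hs // e_loop.
Qed.

Lemma strong_pair_Tat (y : obj G) g h : src g = y -> src h = y -> tgt g = tgt h ->
  strong_pair (Tat e T y) g h <-> strong_pair T g h.
Proof.
move=> <- hs ht.
have hc : src (comp (inv g) h) = src g /\ tgt (comp (inv g) h) = src g.
  by split; endpoints.
have act_srch t : act h (t * e (idm (src g))) = act h t by rewrite -hs act_src.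
split=> hQ hns f fI fnz hf.
  rewrite -(stab_Tat hc.1 hc.2) in hns.
  have [_ [[t [Tt ->]] hne]] := hQ hns f fI fnz hf.
  by exists t; split=> //; rewrite act_src act_srch in hne.
rewrite (stab_Tat hc.1 hc.2) in hns.
have [t [Tt hne]] := hQ hns f fI fnz hf.
by exists (t * e (idm (src g))); split; [exists t | rewrite act_src act_srch].
Qed.

Lemma act_conj m g k t : full m -> full k -> src m = tgt g -> src g = tgt k ->
  act k t = t * e k -> act (comp m (comp g k)) t = al m (act g t).
Proof.
move=> fm fk hm hk htk.
rewrite act_comp_fulll //; last by endpoints.
rewrite act_comp_fullr // htk; case: (fk) => _ ->; rewrite -hk act_src.
by case: (fm) => -> _; rewrite hm (inI_tgt (act_in g t)).
Qed.

Lemma e_conj m g k : full m -> full k -> src m = tgt g -> src g = tgt k ->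
  e (comp m (comp g k)) = al m (e g).
Proof.
move=> fm fk hm hk.
rewrite e_comp_fulll //; last by endpoints.
rewrite e_comp_fullr //; case: (fm) => -> _.
by rewrite hm (inI_tgt (inI_e g)).
Qed.

Lemma strong_pair_conj g h m k1 k2 :
  tgt g = tgt h -> src m = tgt g -> src g = tgt k1 -> src h = tgt k2 ->
  full m -> full k1 -> full k2 ->
  stab e al T k1 -> stab e al T (inv k1) ->
  stab e al T k2 -> stab e al T (inv k2) ->
  strong_pair T (comp m (comp g k1)) (comp m (comp h k2)) -> strong_pair T g h.
Proof.
move=> hgh hm h1 h2 fm fk1 fk2 s1 s1V s2 s2V hQ hns f fI fnz hf.
have inI_m a x : tgt x = tgt g -> inI e x a -> inI e (inv m) a.
  by move=> hx /inI_tgt ha; apply: full_inIV; rewrite // hm -hx.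
have fm' : inI e (inv m) f by case: hf; apply: inI_m.
have hns' : ~ stab e al T (comp (inv (comp m (comp g k1))) (comp m (comp h k2))).
  rewrite compV_conj // => hst; apply: hns.
  have k1VV : stab e al T (inv (inv k1)) by rewrite invK.
  have hk1 : src (inv k1) = tgt (comp (comp (inv g) h) k2) by endpoints.
  have := stab_comp_fulll (full_inv fk1) k1VV hk1 hst.
  by apply: stab_comp_fullr fk2 s2V _; endpoints.
have fI' : al m f * al m f = al m f by rewrite -alphaM // fI.
have fnz' : al m f != 0.
  apply: contra_neq fnz => h0.
  by apply: (alpha_inj fm' (inI0 _)); rewrite h0 alpha0.
have hf' :
    inI e (comp m (comp g k1)) (al m f) \/ inI e (comp m (comp h k2)) (al m f).
  rewrite /inI !e_conj // -?hgh // -!alphaM //; try exact: inI_m (inI_e _).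
  by case: hf => ->; [left | right].
have [t [Tt hne]] := hQ hns' _ fI' fnz' hf'.
exists t; split => //; apply: contra_neq hne => heq.
have [k1t k2t] := (s1 _ Tt, s2 _ Tt).
rewrite !act_conj // -?hgh // -!alphaM ?heq //; exact: inI_m (act_in _ _).
Qed.

End Invariants.

Lemma full_paths (H : mor G -> Prop) (Y : obj G -> Prop) (y : obj G) :
  wide_subgroupoid H -> group_type_on e H Y -> Y y ->
  exists kap : obj G -> mor G, forall w, Y w ->
    H (kap w) /\ src (kap w) = y /\ tgt (kap w) = w /\ full (kap w).
Proof.
move=> [_ [Hcomp HV]] [x0 [_ [tau [_ htau]]]] hy.
have [Hy [sy [ty [ey1 ey2]]]] := htau y hy.
have fy : full (tau y) by rewrite /full ey1 ey2 sy ty.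
exists (fun w => comp (tau w) (inv (tau y))) => w hw.
have [Hw [sw [tw [ew1 ew2]]]] := htau w hw.
have fw : full (tau w) by rewrite /full ew1 ew2 sw tw.
have hs : src (tau w) = tgt (inv (tau y)) by endpoints.
split; first exact: Hcomp _ _ Hw (HV _ Hy) hs.
by split; [endpoints | split; [endpoints | exact: full_comp (full_inv fy) hs]].
Qed.

Section Subgroupoid.
Variable H : mor G -> Prop.
Hypothesis hH : wSub e H.
Hypothesis horth : forall x y : obj G, x != y -> e (idm x) * e (idm y) = 0.
Local Notation T := (fixed e al H (fun _ => True)).

Lemma stab_fixed k : H k -> stab e al T k.
Proof. by move=> Hk t [_ ht]; apply: ht. Qed.

Lemma Hconn_full (y w : obj G) : Hconn H y w ->
  exists k, H k /\ src k = y /\ tgt k = w /\ full k.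
Proof.
move=> hyw; have [kap kapP] := full_paths hH.1 (hH.2 y) (Hconn_refl y hH.1).
by exists (kap w); apply: kapP.
Qed.

Lemma act_fixed_transport (y : obj G) b k k1 k2 :
  (forall m, H m -> src m = y -> tgt m = y -> act m b = b * e m) ->
  H k -> H k1 -> H k2 -> full k1 -> full k2 ->
  src k1 = y -> src k2 = y -> src k = tgt k1 -> tgt k2 = tgt k ->
  act k (act k1 b) = act k2 b * e k.
Proof.
move=> hfix Hk Hk1 Hk2 fk1 fk2 s1 s2 hkk1 t2.
have [_ [Hcomp HV]] := hH.1.
pose m := comp (inv k2) (comp k k1).
have hkm : comp k k1 = comp k2 m by rewrite /m compKVg //; endpoints.
have hsm : src k2 = tgt m by rewrite /m; endpoints.
have Hm : H m by apply: Hcomp (HV _ Hk2) (Hcomp _ _ Hk Hk1 hkk1) _; endpoints.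
rewrite -act_comp_fullr // hkm act_comp_fulll // hfix //;
  try (rewrite /m; endpoints).
by rewrite actM -e_comp_fulll // -hkm e_comp_fullr.
Qed.

Lemma extend_invariant (y : obj G) b : inI e (idm y) b ->
  (forall k, H k -> src k = y -> tgt k = y -> act k b = b * e k) ->
  exists t, T t /\ t * e (idm y) = b /\
    forall w, ~ Hconn H y w -> t * e (idm w) = 0.
Proof.
move=> hb hfix.
have hW := hH.1; have [_ [_ HV]] := hW.
have [kap kapP] := full_paths hW (hH.2 y) (Hconn_refl y hW).
pose F w := if excluded_middle_informative (Hconn H y w) then act (kap w) b else 0.
have Fyes w : Hconn H y w -> F w = act (kap w) b.
  by rewrite /F; case: excluded_middle_informative.
have Fno w : ~ Hconn H y w -> F w = 0.
  by rewrite /F; case: excluded_middle_informative.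
have tF w : (\sum_u F u) * e (idm w) = F w.
  apply: sum_idm_mulr => // u.
  have [hu | hu] := classic (Hconn H y u); last by rewrite Fno ?mul0r.
  have [_ [_ [tu _]]] := kapP u hu.
  by have := inI_tgt (act_in (kap u) b); rewrite tu Fyes.
exists (\sum_u F u); split; [split=> // k Hk | split].
- rewrite -act_src tF -(e_tgt k) mulrA mulrAC tF.
  have [hs | hs] := classic (Hconn H y (src k)).
    have ht : Hconn H y (tgt k) by apply: Hconn_trans hW hs _; exists k.
    have [Hs [ss [ts fs]]] := kapP _ hs; have [Ht [st [tt ft]]] := kapP _ ht.
    rewrite !Fyes //.
    exact: act_fixed_transport hfix Hk Hs Ht fs ft ss st (esym ts) tt.
  have ht : ~ Hconn H y (tgt k).
    move=> ht; apply: hs; apply: Hconn_trans hW ht _.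
    by exists (inv k); rewrite src_inv tgt_inv; split=> //; apply: HV.
  by rewrite !Fno // act0 mul0r.
- have [Hy [sy [ty [_ ey]]]] := kapP _ (Hconn_refl y hW).
  by rewrite tF Fyes ?hfix ?ey ?ty //; exact: Hconn_refl.
- by move=> w hw; rewrite tF Fno.
Qed.

Lemma fixed_loops_Tat (y : obj G) a :
  fixed e al (fun k => H k /\ src k = y /\ tgt k = y) (fun a => inI e (idm y) a) a
  <-> Tat e T y a.
Proof.
split=> [[ha hfix] | [t [Tt ->]]].
  have hfix' k (Hk : H k) (sk : src k = y) (tk : tgt k = y) :=
    hfix k (conj Hk (conj sk tk)).
  by have [t [Tt [<- _]]] := extend_invariant ha hfix'; exists t.
split=> [|k [Hk [sk tk]]]; first exact: inI_mulr.
rewrite -sk act_src (stab_fixed Hk Tt) -mulrA (mulrC (e (idm _))).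
by rewrite sk -tk e_tgt.
Qed.

Lemma strong_pair_disconnected g h :
  ~ Hconn H (src g) (src h) -> strong_pair T g h.
Proof.
move=> hdisc _ f fI fnz hf.
have e_fixed k : H k -> src k = src g -> tgt k = src g ->
    act k (e (idm (src g))) = e (idm (src g)) * e k.
  move=> _ sk tk; rewrite -sk -{1}[e (idm _)]mul1r act_src act1 mulrC.
  by rewrite sk -tk e_tgt.
have [t0 [Tt0 [t0g t0h]]] := extend_invariant (inI_e (idm (src g))) e_fixed.
have [hE | hE] := eqVneq (e g * f) (e h * f).
  exists t0; split=> //.
  rewrite -(act_src g) t0g -[e (idm _)]mul1r act_src act1.
  rewrite -(act_src h) t0h // act0 mul0r.
  suff -> : e g * f = f by [].
  by case: hf => hf; [rewrite mulrC | rewrite hE mulrC]; apply: hf.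
exists 1; split; last by rewrite !act1.
by split=> // k _; rewrite act1 mul1r.
Qed.

Lemma strong_pair_connected g h : alpha_strong e al T -> tgt g = tgt h ->
  Hconn H (src g) (src h) -> strong_pair T g h.
Proof.
move=> hT hgh hc.
have [k [Hk [sk [tk fk]]]] := Hconn_full hc.
have [Hid [_ HV]] := hH.1.
have sm : src (idm (tgt g)) = tgt g by rewrite src_idm.
have s1 : src g = tgt (idm (src g)) by rewrite tgt_idm.
apply: (strong_pair_conj hgh sm s1 (esym tk) (full_idm _) (full_idm _) fk
  (stab_fixed (Hid _)) (stab_fixed (HV _ (Hid _)))
  (stab_fixed Hk) (stab_fixed (HV _ Hk))).
set g' := comp _ (comp g _); set h' := comp _ (comp h k).
have sg' : src g' = src g by rewrite /g'; endpoints.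
have sh' : src h' = src g by rewrite /h'; endpoints.
have tt' : tgt g' = tgt h' by rewrite /g' /h'; endpoints.
apply/(strong_pair_Tat _ sg' sh' tt').
exact: hT (src g) (tgt g') g' h' sg' erefl sh' (esym tt').
Qed.

Lemma alpha_strong_pairs :
  alpha_strong e al T <-> forall g h, tgt g = tgt h -> strong_pair T g h.
Proof.
split=> [hT g h hgh | hT y z g h sg tg sh th].
  have [hc | hc] := classic (Hconn H (src g) (src h)).
    exact: strong_pair_connected.
  exact: strong_pair_disconnected.
apply/(strong_pair_Tat _ sg sh); first by rewrite tg th.
by apply: hT; rewrite tg th.
Qed.

Lemma alpha_strong_of_loops (J : Type) (ys : J -> obj G) :
  (forall y z : obj G, exists k, src k = y /\ tgt k = z /\ full k) ->
  (forall x, exists j, Hconn H (ys j) x) ->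
  (forall j, strong_at e al (Tat e T (ys j)) (ys j) (ys j)) ->
  alpha_strong e al T.
Proof.
move=> Gfull cover hloops y z g h sg tg sh th.
have [j hj] := cover y.
have [k [Hk [sk [tk fk]]]] := Hconn_full hj.
have [m [sm [tm fm]]] := Gfull z (ys j).
have [_ [_ HV]] := hH.1.
have hgh : tgt g = tgt h by rewrite tg th.
apply/(strong_pair_Tat _ sg sh hgh).
apply: (strong_pair_conj hgh _ _ _ fm fk fk
  (stab_fixed Hk) (stab_fixed (HV _ Hk)) (stab_fixed Hk) (stab_fixed (HV _ Hk)));
  try congruence.
set g' := comp m (comp g k); set h' := comp m (comp h k).
have [sg' tg'] : src g' = ys j /\ tgt g' = ys j by rewrite /g'; split; endpoints.
have [sh' th'] : src h' = ys j /\ tgt h' = ys j by rewrite /h'; split; endpoints.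
apply/(strong_pair_Tat _ sg' sh'); first by rewrite tg' th'.
exact: hloops j g' h' sg' tg' sh' th'.
Qed.

End Subgroupoid.
End PartialAction.

Theorem proposition5p4 (G : groupoid) (S : comNzRingType)
  (e : mor G -> S) (al : mor G -> S -> S)
  (hconn : connected G)
  (hpa : unital_partial_action e al)
  (hsum : direct_sum_decomp e)
  (hgt : group_type_on e (fun _ => True) (fun _ => True))
  (hnz : forall g, e g != 0)
  (H : mor G -> Prop) (hH : wSub e H)
  (r : nat) (ys : 'I_r -> obj G)
  (hys_cover : forall x, exists j, Hconn H (ys j) x)
  (hys_distinct : forall j k, Hconn H (ys j) (ys k) -> j = k) :
  let T := fixed e al H (fun _ => True) in
  (alpha_strong e al T <->
   (forall g h : mor G, tgt g = tgt h -> ~ stab e al T (comp (inv g) h) ->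
      forall f : S, f * f = f -> f != 0 -> (inI e g f \/ inI e h f) ->
      exists t, T t /\ al g (t * e (inv g)) * f != al h (t * e (inv h)) * f)) /\
  (alpha_strong e al T <->
   (forall j : 'I_r,
      strong_at e al
        (fixed e al (fun k => H k /\ src k = ys j /\ tgt k = ys j)
                    (fun a => inI e (idm (ys j)) a))
        (ys j) (ys j))).
Proof.
move=> T.
have horth := hsum.1.
have wideT : wide_subgroupoid (fun _ : mor G => True) by [].
have Gfull (y z : obj G) : exists k, src k = y /\ tgt k = z /\ full e k.
  have [kap kapP] := full_paths hpa wideT hgt (I : (fun _ => True) y).
  by have [_ hk] := kapP z I; exists (kap z).
have loopsE j := fixed_loops_Tat hpa hH horth (ys j).
split; first exact (alpha_strong_pairs hpa hH horth).
split=> [hT j g h sg tg sh th | hloops].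
  apply: strong_pair_ext (fun a => iff_sym (loopsE j a)) _.
  exact: hT _ _ g h sg tg sh th.
apply: (alpha_strong_of_loops hpa hH Gfull hys_cover) => j g h sg tg sh th.
by apply: strong_pair_ext (loopsE j) _; exact: hloops j g h sg tg sh th.
Qed.
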